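(* Let $\mathcal{C}$ be a class of languages that is closed under inverse injective alphabet morphisms (it is not assumed that $\mathcal{C}$ is closed under reversal). Then for every finitely generated group $G$ and every finite monoid generating set $A \subseteq G$: $\mathrm{wp}_A(G) \in \mathcal{C}$ if and only if $(\mathrm{wp}_A(G))^{\mathrm{rev}} \in \mathcal{C}$.
   Context: A language is a pair $(A,L)$ with $A$ a finite alphabet and $L \subseteq A^*$. An alphabet morphism is a map $h: A^* \to B^*$ ($A,B$ finite alphabets) with $h(uv) = h(u)h(v)$ for all $u,v$; it is injective if it is injective as a map. For $L \subseteq B^*$, $h^{-1}(L) = \{x \in A^* : h(x) \in L\}$. A class $\mathcal{C}$ is closed under inverse injective alphabet morphisms iff for every finite alphabet $B$, every $L \subseteq B^*$ in $\mathcal{C}$ and every injective alphabet morphism $h: A^* \to B^*$, $h^{-1}(L) \in \mathcal{C}$. A monoid generating set of $G$ is a subset $A\subseteq G$ such that every element of $G$ is a product of elements of $A$; $A$ is regarded as a finite alphabet and $\mathrm{wp}_A(G) = \{w \in A^* : w \text{ evaluates to the identity of } G\}$. $L^{\mathrm{rev}} = \{w^{\mathrm{rev}} : w \in L\}$ where $(a_1\cdots a_n)^{\mathrm{rev}} = a_n \cdots a_1$. *)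

From mathcomp Require Import all_boot.
Set Implicit Arguments. Unset Strict Implicit. Unset Printing Implicit Defensive.

Definition language (A : finType) := seq A -> Prop.

Definition lang_class := forall A : finType, language A -> Prop.

Definition alphabet_morphism (A B : finType) (h : seq A -> seq B) : Prop :=
  forall u v, h (u ++ v) = h u ++ h v.

Definition preimage_lang (A B : finType) (h : seq A -> seq B) (L : language B)
  : language A := fun x => L (h x).

Definition closed_inv_inj_morph (C : lang_class) : Prop :=
  forall (A B : finType) (L : language B) (h : seq A -> seq B),
    C B L -> alphabet_morphism h -> injective h -> C A (preimage_lang h L).

Definition rev_lang (A : finType) (L : language A) : language A :=
  fun w => exists2 v, L v & w = rev v.

Record is_group (G : Type) (mul : G -> G -> G) (one : G) (inv : G -> G) : Prop := {
  grp_assoc : forall x y z, mul x (mul y z) = mul (mul x y) z;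
  grp_mul1 : forall x, mul one x = x;
  grp_mulr1 : forall x, mul x one = x;
  grp_mulV : forall x, mul (inv x) x = one;
  grp_mulVr : forall x, mul x (inv x) = one }.

(* Evaluation of a word over A, where A is identified with a subset of G via the
   injection iota. *)
Definition eval_word (G : Type) (mul : G -> G -> G) (one : G) (A : finType)
  (iota : A -> G) (w : seq A) : G := foldr (fun a g => mul (iota a) g) one w.

Definition monoid_generating (G : Type) (mul : G -> G -> G) (one : G) (A : finType)
  (iota : A -> G) : Prop :=
  forall g : G, exists w : seq A, eval_word mul one iota w = g.

Definition word_problem (G : Type) (mul : G -> G -> G) (one : G) (A : finType)
  (iota : A -> G) : language A :=
  fun w => eval_word mul one iota w = one.

(* For each letter a fix a word c_a of a common positive length evaluating to a^-1, with
   c_a <> c_b for a <> b (distinct group elements).  The morphism h : a |-> c_a is then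
   injective and h(w) evaluates to (value of rev w)^-1, so h^-1(wp) = wp^rev; the mirrored
   morphism w |-> rev (h (rev w)) pulls wp^rev back to wp. *)
From mathcomp Require Import all_boot.
From Stdlib Require Import FunctionalExtensionality PropExtensionality.
Set Implicit Arguments.
Unset Strict Implicit.
Unset Printing Implicit Defensive.

Lemma rev_langE (A : finType) (L : language A) : rev_lang L = fun w => L (rev w).
Proof.
apply: functional_extensionality => w; apply: propositional_extensionality.
by split=> [[v Lv ->]|Lw]; [rewrite revK | exists (rev w); rewrite ?revK].
Qed.

Lemma rev_langK (A : finType) (L : language A) : rev_lang (rev_lang L) = L.
Proof. by rewrite !rev_langE; apply: functional_extensionality => w; rewrite revK. Qed.

Section Mirror.

Variables (A B : finType) (h : seq A -> seq B).

Definition mirror_morph (w : seq A) : seq B := rev (h (rev w)).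

Lemma mirror_morph_morphism : alphabet_morphism h -> alphabet_morphism mirror_morph.
Proof. by move=> hM u v; rewrite /mirror_morph rev_cat hM rev_cat. Qed.

Lemma mirror_morph_inj : injective h -> injective mirror_morph.
Proof. by move=> h_inj u v /(can_inj revK)/h_inj/(can_inj revK). Qed.

Lemma preimage_mirror_rev (L : language B) :
  preimage_lang mirror_morph (rev_lang L) = rev_lang (preimage_lang h L).
Proof.
rewrite !rev_langE /preimage_lang /mirror_morph.
by apply: functional_extensionality => w; rewrite revK.
Qed.

End Mirror.

Lemma flatten_map_inj (A B : Type) (code : A -> seq B) :
  injective code -> (forall a b, size (code a) = size (code b)) ->
  (forall a, 0 < size (code a)) -> injective (fun w => flatten (map code w)).
Proof.
move=> code_inj code_size code_pos.
elim=> [|a u IHu] [|b v] //= E.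
- by have := f_equal size E; rewrite size_cat; case: (size (code b)) (code_pos b).
- by have := f_equal size E; rewrite size_cat; case: (size (code a)) (code_pos a).
have Eab : code a = code b.
  by have := f_equal (take (size (code a))) E; rewrite take_size_cat // (code_size a b) take_size_cat.
rewrite Eab in E; have := f_equal (drop (size (code b))) E; rewrite !drop_size_cat // => Euv.
by rewrite (code_inj _ _ Eab) (IHu _ Euv).
Qed.

Section Group.

Variables (G : Type) (mul : G -> G -> G) (one : G) (inv : G -> G).
Hypothesis HG : is_group mul one inv.

Lemma inv_unique x y : mul x y = one -> x = inv y.
Proof.
by move=> xy1; rewrite -[x](grp_mulr1 HG) -(grp_mulVr HG y) (grp_assoc HG) xy1 (grp_mul1 HG).
Qed.

Lemma invM x y : inv (mul x y) = mul (inv y) (inv x).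
Proof.
symmetry; apply: inv_unique.
by rewrite -(grp_assoc HG) [mul (inv x) _](grp_assoc HG) (grp_mulV HG) (grp_mul1 HG) (grp_mulV HG).
Qed.

Lemma inv_inj : injective inv.
Proof.
move=> x y Exy; rewrite -[x](grp_mulr1 HG) -(grp_mulV HG y) -Exy.
by rewrite (grp_assoc HG) (grp_mulVr HG) (grp_mul1 HG).
Qed.

Lemma inv_eq_one x : inv x = one <-> x = one.
Proof.
have inv1 : inv one = one by rewrite -[inv one](grp_mulr1 HG) (grp_mulV HG).
by split=> [invx1|->//]; apply: inv_inj; rewrite invx1 inv1.
Qed.

Variables (A : finType) (iota : A -> G).
Local Notation ev := (eval_word mul one iota).

Lemma eval_word_cons a u : ev (a :: u) = mul (iota a) (ev u).
Proof. by []. Qed.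

Lemma eval_word_cat u v : ev (u ++ v) = mul (ev u) (ev v).
Proof.
elim: u => [|a u IHu]; first by rewrite (grp_mul1 HG).
by rewrite cat_cons !eval_word_cons IHu (grp_assoc HG).
Qed.

Lemma eval_flatten_one (T : Type) (f : T -> seq A) (s : seq T) :
  (forall t, ev (f t) = one) -> ev (flatten (map f s)) = one.
Proof.
by move=> f1; elim: s => [|t s IHs] //=; rewrite eval_word_cat f1 IHs (grp_mul1 HG).
Qed.

Lemma exists_inverse_words :
  monoid_generating mul one iota ->
  exists w : A -> seq A, forall a, ev (w a) = inv (iota a) /\ 0 < size (w a).
Proof.
move=> gen.
suff /fin_all_exists[w w_inv] : forall a, exists v, ev v = inv (iota a) /\ 0 < size v.
  by exists w.
move=> a; have [v ev_v] := gen (inv (iota a)).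
exists (v ++ a :: v); split; last by rewrite size_cat addnS.
by rewrite eval_word_cat eval_word_cons ev_v (grp_mulVr HG) (grp_mulr1 HG).
Qed.

Section InverseCode.

Variable w : A -> seq A.
Hypothesis eval_w : forall a, ev (w a) = inv (iota a).
Hypothesis size_w : forall a, 0 < size (w a).

(* The blocks [b :: w b] evaluate to 1; they only serve to equalise the lengths. *)
Definition inv_code (a : A) : seq A :=
  w a ++ flatten [seq b :: w b | b <- enum A & b != a].

Lemma eval_inv_code a : ev (inv_code a) = inv (iota a).
Proof.
rewrite eval_word_cat eval_flatten_one ?(grp_mulr1 HG) // => b.
by rewrite eval_word_cons eval_w (grp_mulVr HG).
Qed.

Lemma size_inv_code a : (size (inv_code a)).+1 = \sum_b (size (w b)).+1.
Proof.
rewrite (bigD1 a) //= size_cat size_flatten /shape -map_comp sumnE big_map big_filter.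
by rewrite big_enum_cond.
Qed.

Definition inv_morph (u : seq A) : seq A := flatten (map inv_code u).

Lemma inv_morph_morphism : alphabet_morphism inv_morph.
Proof. by move=> u v; rewrite /inv_morph map_cat flatten_cat. Qed.

Lemma inv_morph_inj : injective iota -> injective inv_morph.
Proof.
move=> iota_inj; apply: flatten_map_inj.
- by move=> a b Eab; apply/iota_inj/inv_inj; rewrite -!eval_inv_code Eab.
- by move=> a b; apply: succn_inj; rewrite !size_inv_code.
- by move=> a; rewrite size_cat addn_gt0 size_w.
Qed.

Lemma eval_inv_morph u : ev (inv_morph u) = inv (ev (rev u)).
Proof.
elim: u => [|a u IHu]; first by symmetry; apply/inv_eq_one.
rewrite /inv_morph /= eval_word_cat -/(inv_morph u) IHu eval_inv_code rev_cons -cats1.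
by rewrite eval_word_cat invM eval_word_cons (grp_mulr1 HG).
Qed.

Lemma preimage_inv_morph :
  preimage_lang inv_morph (word_problem mul one iota) = rev_lang (word_problem mul one iota).
Proof.
rewrite rev_langE; apply: functional_extensionality => u; apply: propositional_extensionality.
by rewrite /preimage_lang /word_problem eval_inv_morph; apply: inv_eq_one.
Qed.

End InverseCode.

End Group.

Theorem proposition2p7 (C : lang_class) (HC : closed_inv_inj_morph C)
  (G : Type) (mul : G -> G -> G) (one : G) (inv : G -> G)
  (HG : is_group mul one inv)
  (A : finType) (iota : A -> G) (Hiota : injective iota)
  (Hgen : monoid_generating mul one iota) :
  C A (word_problem mul one iota) <-> C A (rev_lang (word_problem mul one iota)).
Proof.
have [w /all_and2 [eval_w size_w]] := exists_inverse_words HG Hgen.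
have hM := inv_morph_morphism w.
have h_inj := inv_morph_inj HG eval_w size_w Hiota.
split=> [CW | CWrev].
  by rewrite -(preimage_inv_morph HG eval_w); apply: HC.
rewrite -[word_problem _ _ _]rev_langK -(preimage_inv_morph HG eval_w) -preimage_mirror_rev.
exact: HC CWrev (mirror_morph_morphism hM) (mirror_morph_inj h_inj).
Qed.
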